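(* Let $\rho$ be a congruence on $\mathcal{OR}_n$ with $\rho(0)=\mathcal I_k$ for some $k\in\{0,1,\dots,m-1\}$, and let $\sigma\in\mathcal{OR}_n$ with $\mathrm{rk}(\sigma)>k+1$. Then for every $\tau\in\mathcal{OR}_n$, $\tau\,\rho\,\sigma$ if and only if $\tau=\sigma$.
   Context: Let $m\ge 1$, $n=2m$, $\mathbf n=\{1,\dots,n\}$, $\theta(i)=n+1-i$, written $\bar i$. A proper subset $I\subset\mathbf n$ is admissible if $I\cap\theta(I)=\emptyset$; $\mathbf n$ and $\emptyset$ are also admissible. For an injective partial map $\sigma$ of $\mathbf n$, $I(\sigma)$ is its domain, $J(\sigma)$ its image, $\mathrm{rk}(\sigma)=|I(\sigma)|$; products are compositions of partial maps. $W=\{\sigma\in S_n:\sigma(\bar i)=\overline{\sigma(i)}\ \forall i\}$, $W'=\{\sigma\in W:|\sigma(\{1,\dots,m\})\cap\{m+1,\dots,n\}|\text{ even}\}$. An admissible $m$-subset is of type I if it contains an even number of elements $>m$, type II otherwise. $\mathcal{OR}_n$ consists of the injective partial maps $\sigma$ with: $\mathrm{rk}(\sigma)<m$ and $I(\sigma),J(\sigma)$ admissible; or $\mathrm{rk}(\sigma)=m$ and $I(\sigma),J(\sigma)$ admissible of the same type; or $\sigma\in W'$. $\mathcal I_k=\{\sigma\in\mathcal{OR}_n:\mathrm{rk}(\sigma)\le k\}$. $0$ is the empty map and $\rho(0)$ its $\rho$-class. *)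

From mathcomp Require Import all_boot.
Set Implicit Arguments. Unset Strict Implicit. Unset Printing Implicit Defensive.

(* Points of n = 2m are encoded 0-based as 'I_(m.*2): the paper's point i
   corresponds to the ordinal i-1.  theta(i) = n+1-i becomes rev_ord. *)
Definition pt (m : nat) := 'I_(m.*2).
Definition theta (m : nat) (i : pt m) : pt m := rev_ord i.

Definition pimap (m : nat) := {ffun pt m -> option (pt m)}.

Definition dom (m : nat) (s : pimap m) : {set pt m} := [set i | s i != None].
Definition img (m : nat) (s : pimap m) : {set pt m} :=
  [set j | [exists i, s i == Some j]].
Definition rk (m : nat) (s : pimap m) : nat := #|dom s|.

Definition pinjective (m : nat) (s : pimap m) : Prop :=
  forall i j y, s i = Some y -> s j = Some y -> i = j.

Definition pmul (m : nat) (s t : pimap m) : pimap m :=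
  [ffun x => if s x is Some y then t y else None].

Definition pzero (m : nat) : pimap m := [ffun => None].

Definition admissible (m : nat) (I : {set pt m}) : bool :=
  (I == setT) || [disjoint I & (@theta m) @: I].

(* an admissible m-subset is of type I iff it has an even number of elements
   > m (0-based: >= m) *)
Definition typeI (m : nat) (I : {set pt m}) : bool :=
  ~~ odd #|[set i in I | m <= val i]|.

(* W' as total injective maps commuting with theta and mapping an even number
   of elements of {1..m} into {m+1..n} *)
Definition inW' (m : nat) (s : pimap m) : Prop :=
  pinjective s /\ (forall i, s i != None) /\
  (forall i y, s i = Some y -> s (theta i) = Some (theta y)) /\
  ~~ odd #|[set y : pt m | (m <= val y) &&
             [exists i : pt m, (val i < m) && (s i == Some y)]]|.

Definition inOR (m : nat) (s : pimap m) : Prop :=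
  pinjective s /\
  [\/ (rk s < m /\ admissible (dom s) /\ admissible (img s)),
      (rk s = m /\ admissible (dom s) /\ admissible (img s) /\
         typeI (dom s) = typeI (img s))
    | inW' s].

Definition congruence (m : nat) (rho : pimap m -> pimap m -> Prop) : Prop :=
  [/\ (forall a b, rho a b -> inOR a /\ inOR b),
      (forall a, inOR a -> rho a a),
      (forall a b, rho a b -> rho b a),
      (forall a b c, rho a b -> rho b c -> rho a c)
    & (forall a b c, inOR c -> rho a b ->
         rho (pmul c a) (pmul c b) /\ rho (pmul a c) (pmul b c))].

From mathcomp Require Import all_boot zify.
Set Implicit Arguments. Unset Strict Implicit. Unset Printing Implicit Defensive.

(* For an admissible A with |A| = k+1, left multiplication by the partial identity
   id_A preserves rho, and as rho(0) = I_k, rank > k is preserved by rho.  So if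
   tau rho sigma and A \subset dom sigma, then id_A tau has rank k+1, i.e.
   A \subset dom tau; right multiplication gives the same for images.  Since
   rk sigma >= k+2, each point of dom sigma lies in such an A, even one avoiding a
   prescribed second point; hence dom tau = dom sigma and im tau = im sigma.  Finally,
   if sigma x = y = tau x' with x' <> x, an A containing x but not x' puts y in the
   image of id_A sigma but not in that of id_A tau. *)

Lemma exists_subset_card (T : finType) (S : {set T}) n :
  n <= #|S| -> exists2 A : {set T}, A \subset S & #|A| = n.
Proof.
rewrite -bin_gt0 -cards_draws card_gt0 => /set0Pn [A].
by rewrite inE => /andP [sAS /eqP cA]; exists A.
Qed.

Lemma exists_subset_card_mem (T : finType) (S : {set T}) x n :
  x \in S -> n < #|S| -> exists A : {set T}, [/\ A \subset S, x \in A & #|A| = n.+1].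
Proof.
move=> xS; rewrite (cardsD1 x S) xS ltnS => /exists_subset_card [A sA cA].
have xA : x \notin A by apply/negP => /(subsetP sA); rewrite !inE eqxx.
exists (x |: A); split; last by rewrite cardsU1 xA cA.
  by rewrite subUset sub1set xS (subset_trans sA) ?subsetDl.
by rewrite setU11.
Qed.

Lemma subset_card_setI (T : finType) (A B : {set T}) : #|B| <= #|A :&: B| -> B \subset A.
Proof.
move=> cB; apply/setIidPr/eqP; rewrite eqEcard subsetIr.
by rewrite (leq_trans cB) ?subset_leq_card ?subsetIl.
Qed.

Lemma ltn_cardsD1 (T : finType) (S : {set T}) z n : n.+1 < #|S| -> n < #|S :\ z|.
Proof. by rewrite (cardsD1 z S); case: (z \in S) => /=; lia. Qed.

Lemma thetaK m : involutive (@theta m).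
Proof. exact: rev_ordK. Qed.

Lemma theta_inj m : injective (@theta m).
Proof. exact: inv_inj (@thetaK m). Qed.

Lemma theta_neq m (i : pt m) : theta i != i.
Proof.
apply/eqP => /(congr1 val) /=; have := ltn_ord i; move: (val i) => a.
by rewrite -addnn; lia.
Qed.

Lemma theta_eq m (i p : pt m) : (theta i == p) = (i == theta p).
Proof. exact: (can2_eq (@thetaK m) (@thetaK m)). Qed.

Lemma half_set_of_selector m (c : pt m -> bool) : (forall i, c (theta i) = ~~ c i) ->
  #|[set i | c i]| = m /\ [disjoint [set i | c i] & (@theta m) @: [set i | c i]].
Proof.
move=> c_theta; set C := [set i | c i].
have thetaC : (@theta m) @: C = ~: C.
  by rewrite (can2_imset_pre _ (@thetaK m) (@thetaK m)); apply/setP => i; rewrite !inE c_theta.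
split; last by rewrite thetaC -subsets_disjoint.
have := cardsC C; rewrite -thetaC card_imset ?card_ord; [lia | exact: theta_inj].
Qed.

Definition prefer m (p : pt m) (c : pt m -> bool) (i : pt m) : bool :=
  if i \in [set p; theta p] then i == p else c i.

Lemma prefer_theta m (p : pt m) c : (forall i, c (theta i) = ~~ c i) ->
  forall i, prefer p c (theta i) = ~~ prefer p c i.
Proof.
move=> c_theta i; rewrite /prefer !inE !theta_eq thetaK c_theta orbC.
have p_theta : (p == theta p) = false by rewrite eq_sym (negbTE (theta_neq p)).
case: (eqVneq i p) => [->|_]; first by rewrite p_theta.
by case: (eqVneq i (theta p)).
Qed.

Lemma exists_half_set m (x z : pt m) : z != x ->
  exists C : {set pt m}, [/\ x \in C, z \notin C, #|C| = m & [disjoint C & (@theta m) @: C]].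
Proof.
move=> zx; pose c := prefer x (prefer (theta z) (fun i : pt m => val i < m)).
have c_theta : forall i, c (theta i) = ~~ c i.
  apply/prefer_theta/prefer_theta => i /=; have := ltn_ord i; move: (val i) => a.
  by rewrite -addnn; lia.
have [cC dC] := half_set_of_selector c_theta.
exists [set i | c i]; split=> //; rewrite !inE /c /prefer !inE ?eqxx //.
rewrite (negbTE zx) /= thetaK eqxx orbT; case: ifP => // _.
by rewrite eq_sym theta_neq.
Qed.

Lemma exists_admissible_subset m k (D : {set pt m}) x z :
  admissible D -> x \in D :\ z -> k < #|D :\ z| -> k < m ->
  exists A : {set pt m}, [/\ A \subset D :\ z, x \in A, #|A| = k.+1 & admissible A].
Proof.
move=> admD xD kD km.
have [S [sSD xS kS dS]] : exists S : {set pt m},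
    [/\ S \subset D :\ z, x \in S, k < #|S| & [disjoint S & (@theta m) @: S]].
  case/orP: admD => [/eqP DT | dD].
    (* Subsets of the whole set need not be admissible: work inside a half set instead. *)
    have zx : z != x by move: xD; rewrite !inE eq_sym => /andP [].
    have [C [xC zC cC dC]] := exists_half_set zx.
    exists C; split=> //; last by rewrite cC.
    apply/subsetP => i iC.
    by rewrite !inE DT in_setT andbT; apply: contraNneq zC => <-.
  exists (D :\ z); split=> //.
  by apply: disjointW dD; rewrite ?imsetS ?subsetDl.
have [A [sAS xA cA]] := exists_subset_card_mem xS kS.
exists A; split=> //; first exact: subset_trans sSD.
by rewrite /admissible (disjointW sAS (imsetS _ sAS) dS) orbT.
Qed.

Lemma imgP m (u : pimap m) y : reflect (exists i, u i = Some y) (y \in img u).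
Proof. by rewrite inE; apply: (iffP existsP) => -[i /eqP ui]; exists i; rewrite ui. Qed.

Lemma card_img m (u : pimap m) : pinjective u -> #|img u| = rk u.
Proof.
move=> inj_u; pose f i := odflt i (u i).
have -> : img u = f @: dom u.
  apply/setP => y; apply/imgP/imsetP => [[i ui] | [i]].
    by exists i; rewrite /f ?inE ui.
  by rewrite inE /f; case ui: (u i) => [a|] //= _ ->; exists i.
apply: card_in_imset => i j; rewrite !inE /f.
case ui: (u i) => [a|] //; case uj: (u j) => [b|] //= _ _ eab.
by apply: (inj_u _ _ a); rewrite ?ui ?uj ?eab.
Qed.

Lemma inOR_admissible m (u : pimap m) : inOR u -> admissible (dom u) /\ admissible (img u).
Proof.
case=> inj_u [[_ [? ?]] | [_ [? [? _]]] | [_ [total_u _]]]; try by split.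
have domT : dom u = setT by apply/setP => i; rewrite !inE total_u.
have imgT : img u = setT.
  by apply/eqP; rewrite eqEcard subsetT (card_img inj_u) /rk domT leqnn.
by rewrite /admissible domT imgT eqxx.
Qed.

Definition pid m (A : {set pt m}) : pimap m := [ffun i => if i \in A then Some i else None].

Lemma dom_pid m (A : {set pt m}) : dom (pid A) = A.
Proof. by apply/setP => i; rewrite !inE ffunE; case: (i \in A). Qed.

Lemma img_pid m (A : {set pt m}) : img (pid A) = A.
Proof.
apply/setP => j; apply/imgP/idP => [[i] | jA]; last by exists j; rewrite ffunE jA.
by rewrite ffunE; case: ifP => // iA [<-].
Qed.

Lemma pinjective_pid m (A : {set pt m}) : pinjective (pid A).
Proof. by move=> i j y; rewrite !ffunE; do 2!case: ifP => // _ [->]. Qed.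

Lemma pid_inOR m (A : {set pt m}) : admissible A -> #|A| <= m -> inOR (pid A).
Proof.
move=> admA cA; split; first exact: pinjective_pid.
rewrite /rk dom_pid img_pid; move: cA; rewrite leq_eqVlt => /orP [/eqP cA | cA].
  by apply: Or32.
by apply: Or31.
Qed.

Lemma pinjective_mul m (u v : pimap m) :
  pinjective u -> pinjective v -> pinjective (pmul u v).
Proof.
move=> inj_u inj_v i j y; rewrite !ffunE.
case ui: (u i) => [a|] //; case uj: (u j) => [b|] // va vb.
by apply: (inj_u _ _ a); rewrite ?ui ?uj ?(inj_v _ _ _ va vb).
Qed.

Lemma dom_pid_mul m (A : {set pt m}) u : dom (pmul (pid A) u) = A :&: dom u.
Proof. by apply/setP => i; rewrite !inE !ffunE; case: (i \in A). Qed.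

Lemma img_mul_pid m (u : pimap m) B : img (pmul u (pid B)) = img u :&: B.
Proof.
apply/setP => y; apply/imgP/setIP => [[i] | [/imgP [i ui] yB]].
  rewrite !ffunE; case ui: (u i) => [a|] //; rewrite ffunE; case: ifP => // aB [<-].
  by split=> //; apply/imgP; exists i.
by exists i; rewrite !ffunE ui ffunE yB.
Qed.

Section CongruenceAboveIdeal.

Variables (m k : nat) (rho : pimap m -> pimap m -> Prop).
Hypotheses (rho_congr : congruence rho) (k_lt_m : k < m).
Hypothesis rho_zero : forall t, rho t (@pzero m) <-> inOR t /\ rk t <= k.

Lemma rho_inOR u v : rho u v -> inOR u /\ inOR v.
Proof. by case: rho_congr => rho_OR _ _ _ _; apply: rho_OR. Qed.

Lemma rho_sym u v : rho u v -> rho v u.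
Proof. by case: rho_congr => _ _ sym _ _; apply: sym. Qed.

Lemma rho_pid_mul A u v : admissible A -> #|A| <= m -> rho u v ->
  rho (pmul (pid A) u) (pmul (pid A) v).
Proof. by case: rho_congr => _ _ _ _ mul admA cA /(mul _ _ _ (pid_inOR admA cA)) []. Qed.

Lemma rho_mul_pid B u v : admissible B -> #|B| <= m -> rho u v ->
  rho (pmul u (pid B)) (pmul v (pid B)).
Proof. by case: rho_congr => _ _ _ _ mul admB cB /(mul _ _ _ (pid_inOR admB cB)) []. Qed.

Lemma rho_rk_gt u v : rho u v -> k < rk u -> k < rk v.
Proof.
case: rho_congr => _ _ _ trans _ ruv; rewrite !ltnNge; apply: contraNN => rkv.
have [_ ORv] := rho_inOR ruv.
by have /rho_zero [] := trans _ _ _ ruv (proj2 (rho_zero v) (conj ORv rkv)).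
Qed.

Lemma rho_dom_restrict A u v : rho u v -> admissible A -> #|A| = k.+1 ->
  A \subset dom u -> A \subset dom v.
Proof.
move=> ruv admA cA sAu; apply: subset_card_setI.
have := rho_rk_gt (rho_pid_mul admA (leq_trans (eq_leq cA) k_lt_m) ruv).
by rewrite /rk !dom_pid_mul (setIidPl sAu) cA setIC => /(_ (ltnSn k)).
Qed.

Lemma rho_img_restrict B u v : rho u v -> admissible B -> #|B| = k.+1 ->
  B \subset img u -> B \subset img v.
Proof.
move=> ruv admB cB sBu; have [[inj_u _] [inj_v _]] := rho_inOR ruv.
apply: subset_card_setI.
have := rho_rk_gt (rho_mul_pid admB (leq_trans (eq_leq cB) k_lt_m) ruv).
have inj_uB := pinjective_mul inj_u (@pinjective_pid m B).
have inj_vB := pinjective_mul inj_v (@pinjective_pid m B).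
rewrite -(card_img inj_uB) -(card_img inj_vB).
by rewrite !img_mul_pid (setIidPr sBu) cB => /(_ (ltnSn k)).
Qed.

Lemma rho_dom_sub u v : rho u v -> k.+1 < rk u -> dom u \subset dom v.
Proof.
move=> ruv rku; apply/subsetP => x xu.
have [admD _] := inOR_admissible (rho_inOR ruv).1.
have xD : x \in dom u :\ theta x by rewrite in_setD1 eq_sym theta_neq.
have [A [sAD xA cA admA]] := exists_admissible_subset admD xD (ltn_cardsD1 _ rku) k_lt_m.
have sAu := subset_trans sAD (subsetDl _ _).
exact: subsetP (rho_dom_restrict ruv admA cA sAu) x xA.
Qed.

Lemma rho_img_sub u v : rho u v -> k.+1 < rk u -> img u \subset img v.
Proof.
move=> ruv rku; apply/subsetP => y yu; have [ORu _] := rho_inOR ruv.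
have [_ admI] := inOR_admissible ORu.
have yI : y \in img u :\ theta y by rewrite in_setD1 eq_sym theta_neq.
have kI : k < #|img u :\ theta y| by apply: ltn_cardsD1; rewrite card_img //; case: ORu.
have [B [sBI yB cB admB]] := exists_admissible_subset admI yI kI k_lt_m.
have sBu := subset_trans sBI (subsetDl _ _).
exact: subsetP (rho_img_restrict ruv admB cB sBu) y yB.
Qed.

Lemma rho_dom_eq u v : rho u v -> k.+1 < rk u -> dom u = dom v.
Proof.
move=> ruv rku; have suv := rho_dom_sub ruv rku.
apply/eqP; rewrite eqEsubset suv; apply: rho_dom_sub (rho_sym ruv) _.
by rewrite (leq_trans rku) // subset_leq_card.
Qed.

Lemma rho_img_eq u v : rho u v -> k.+1 < rk u -> img u = img v.
Proof.
move=> ruv rku; have suv := rho_img_sub ruv rku.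
have [[inj_u _] [inj_v _]] := rho_inOR ruv.
apply/eqP; rewrite eqEsubset suv; apply: rho_img_sub (rho_sym ruv) _.
by rewrite (leq_trans rku) // -(card_img inj_u) -(card_img inj_v) subset_leq_card.
Qed.

Lemma rho_img_pid_mul_sub A u v : rho u v -> admissible A -> #|A| = k.+1 ->
  A \subset dom u -> img (pmul (pid A) u) \subset img (pmul (pid A) v).
Proof.
move=> ruv admA cA sAu; have ruvA := rho_pid_mul admA (leq_trans (eq_leq cA) k_lt_m) ruv.
have [ORuA _] := rho_inOR ruvA; have [_ admI] := inOR_admissible ORuA.
apply: rho_img_restrict ruvA admI _ (subxx _).
by rewrite card_img; [rewrite /rk dom_pid_mul (setIidPl sAu) | case: ORuA].
Qed.

Lemma rho_eq u v : rho u v -> k.+1 < rk u -> u = v.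
Proof.
move=> ruv rku; have [ORu [inj_v _]] := rho_inOR ruv.
have edom := rho_dom_eq ruv rku.
apply/ffunP => x; case ux: (u x) => [y|]; last first.
  have : x \notin dom v by rewrite -edom inE ux.
  by rewrite inE negbK => /eqP.
have : x \in dom v by rewrite -edom inE ux.
rewrite inE; case vx: (v x) => [y'|] // _.
case: (eqVneq y y') => [-> // | ny]; exfalso.
have /imgP [x' vx'] : y \in img v by rewrite -(rho_img_eq ruv rku); apply/imgP; exists x.
have x'x : x' != x by apply: contra_neq ny => ex; move: vx'; rewrite ex vx => -[].
have [admD _] := inOR_admissible ORu.
have xD : x \in dom u :\ x' by rewrite in_setD1 eq_sym x'x inE ux.
have [A [sAD xA cA admA]] := exists_admissible_subset admD xD (ltn_cardsD1 _ rku) k_lt_m.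
have yuA : y \in img (pmul (pid A) u) by apply/imgP; exists x; rewrite !ffunE xA ux.
have sAu := subset_trans sAD (subsetDl _ _).
have /imgP [i] := subsetP (rho_img_pid_mul_sub ruv admA cA sAu) y yuA.
rewrite !ffunE; case: ifP => // iA vi; move: (inj_v _ _ _ vi vx') iA => -> /(subsetP sAD).
by rewrite !inE eqxx.
Qed.

End CongruenceAboveIdeal.

Theorem lemma4p9 (m : nat) (hm : 1 <= m) (rho : pimap m -> pimap m -> Prop)
  (hrho : congruence rho) (k : nat) (hk : k <= m - 1)
  (h0 : forall t, rho t (@pzero m) <-> (inOR t /\ rk t <= k))
  (s : pimap m) (hs : inOR s) (hrk : k + 1 < rk s) :
  forall t, inOR t -> (rho t s <-> t = s).
Proof.
have k_lt_m : k < m by lia.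
move=> t _; split=> [rts | ->]; last by case: hrho => _ refl _ _ _; apply: refl.
by apply/esym/(rho_eq hrho k_lt_m h0 (rho_sym hrho rts)); rewrite -addn1.
Qed.
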